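(* Let $H$ be a real Hilbert space with inner product $(\cdot,\cdot)$, let $G:H\to H$ be a bounded, self-adjoint, positive definite linear operator (i.e. $(Gv,v)>0$ for $v\neq0$), let $\bar u\in H$, and let $0<\alpha\le\frac12$. Let $(u_j)_{j\ge0}$ be the Mitlar iterates: $[(1-\alpha)G+\alpha I]u_0=\bar u$ and $[(1-\alpha)G+\alpha I](u_j-u_{j-1})=\bar u-Gu_{j-1}$ for $j\ge1$. Define $E_0(v)=\frac12(Gv,v)-(\bar u,v)$ for $v\in H$. Then for every $j\ge0$, $$E_0(u_j)-E_0(u_{j+1})=\Big(\big[(\tfrac12-\alpha)G+\alpha I\big](u_{j+1}-u_j),\,u_{j+1}-u_j\Big)\ge0,$$ with equality only when $u_{j+1}=u_j$. In particular $E_0(u_{j+1})<E_0(u_j)$ unless $u_{j+1}=u_j$. *)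

From HB Require Import structures.
From mathcomp Require Import all_boot all_order all_algebra.
From mathcomp Require Import all_classical all_reals all_analysis.
Set Implicit Arguments. Unset Strict Implicit. Unset Printing Implicit Defensive.
Import Order.TTheory GRing.Theory Num.Theory.
Local Open Scope ring_scope.

(* A real Hilbert space: a complete normed R-vector space H whose norm comes
   from an inner product ip (bilinear, symmetric, ip v v = |v|^2). *)
Definition is_inner_product (R : realType) (H : normedModType R)
  (ip : H -> H -> R) : Prop :=
  [/\ (forall (a : R) (u v w : H), ip (a *: u + v) w = a * ip u w + ip v w),
      (forall u v : H, ip u v = ip v u) &
      (forall v : H, ip v v = `|v| ^+ 2)].

Definition bounded_op (R : realType) (H : normedModType R) (G : H -> H) : Prop :=
  exists C : R, forall v : H, `|G v| <= C * `|v|.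

Definition self_adjoint (R : realType) (H : normedModType R)
  (ip : H -> H -> R) (G : H -> H) : Prop :=
  forall v w : H, ip (G v) w = ip v (G w).

Definition pos_definite (R : realType) (H : normedModType R)
  (ip : H -> H -> R) (G : H -> H) : Prop :=
  forall v : H, v != 0 -> 0 < ip (G v) v.

Definition mitlar_op (R : realType) (H : normedModType R) (G : H -> H)
  (alpha : R) (v : H) : H := (1 - alpha) *: G v + alpha *: v.

Definition mitlar_iterates (R : realType) (H : normedModType R) (G : H -> H)
  (alpha : R) (ubar : H) (u : nat -> H) : Prop :=
  mitlar_op G alpha (u 0%N) = ubar /\
  forall j : nat, mitlar_op G alpha (u j.+1 - u j) = ubar - G (u j).

Definition E0 (R : realType) (H : normedModType R) (ip : H -> H -> R)
  (G : H -> H) (ubar : H) (v : H) : R := 2^-1 * ip (G v) v - ip ubar v.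

From HB Require Import structures.
From mathcomp Require Import all_boot all_order all_algebra.
From mathcomp Require Import all_classical all_reals all_analysis.
From mathcomp Require Import lra.
Set Implicit Arguments. Unset Strict Implicit.
Import Order.TTheory GRing.Theory Num.Theory.
Local Open Scope ring_scope.

(* Expanding the quadratic energy around u_j, the Mitlar equation tested
   against d = u_{j+1} - u_j replaces the linear term (G u_j - ubar, d) by
   -((1-alpha) G d + alpha d, d); what remains of E_0(u_j) - E_0(u_{j+1}) is
   ((1/2 - alpha) G d + alpha d, d), which is positive for d != 0 because
   alpha > 0, 1/2 - alpha >= 0 and G is positive definite.  Neither
   completeness of H nor boundedness of G enters: they only matter for the
   existence of the iterates, which is assumed here. *)

Section InnerProduct.
Variables (R : realType) (H : normedModType R) (ip : H -> H -> R).
Hypothesis ipP : is_inner_product ip.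

Lemma ipDl (x y w : H) : ip (x + y) w = ip x w + ip y w.
Proof. by case: ipP => lin _ _; have := lin 1 x y w; rewrite scale1r mul1r. Qed.

Lemma ip0l (w : H) : ip 0 w = 0.
Proof. by apply: (@addrI _ (ip 0 w)); rewrite -ipDl !addr0. Qed.

Lemma ipZl (a : R) (x w : H) : ip (a *: x) w = a * ip x w.
Proof. by case: ipP => lin _ _; have := lin a x 0 w; rewrite addr0 ip0l addr0. Qed.

Lemma ipNl (x w : H) : ip (- x) w = - ip x w.
Proof. by rewrite -scaleN1r ipZl mulN1r. Qed.

Lemma ipC (x y : H) : ip x y = ip y x.
Proof. by case: ipP. Qed.

Lemma ipDr (x y w : H) : ip w (x + y) = ip w x + ip w y.
Proof. by rewrite ipC ipDl !(ipC w). Qed.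

Lemma ip_self_ge0 (v : H) : 0 <= ip v v.
Proof. by case: ipP => _ _ ->; rewrite sqr_ge0. Qed.

Lemma ip_self_eq0 (v : H) : ip v v = 0 -> v = 0.
Proof. by case: ipP => _ _ ->; move/eqP; rewrite sqrf_eq0 normr_eq0 => /eqP. Qed.

End InnerProduct.

Section Energy.
Variables (R : realType) (H : normedModType R) (ip : H -> H -> R).
Variables (G : {linear H -> H}) (ubar : H).
Hypothesis ipP : is_inner_product ip.

Lemma pos_definite_ge0 (v : H) : pos_definite ip G -> 0 <= ip (G v) v.
Proof.
move=> Gpd; have [->|v_neq0] := eqVneq v 0; first by rewrite linear0 (ip0l ipP).
exact/ltW/Gpd.
Qed.

Lemma ip_shifted_gt0 (b a : R) (d : H) : pos_definite ip G ->
  0 <= b -> 0 < a -> d != 0 -> 0 < ip (b *: G d + a *: d) d.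
Proof.
move=> Gpd b_ge0 a_gt0 d_neq0; rewrite (ipDl ipP) !(ipZl ipP).
have Gdd_ge0 := pos_definite_ge0 d Gpd.
have dd_gt0 : 0 < ip d d.
  rewrite lt0r ip_self_ge0 // andbT.
  by apply: contra d_neq0 => /eqP /(ip_self_eq0 ipP) ->.
by apply: ltr_wpDl; [exact: mulr_ge0 | exact: mulr_gt0].
Qed.

Lemma ip_shifted_ge0 (b a : R) (d : H) : pos_definite ip G ->
  0 <= b -> 0 < a -> 0 <= ip (b *: G d + a *: d) d.
Proof.
move=> Gpd b_ge0 a_gt0; have [->|d_neq0] := eqVneq d 0.
  by rewrite linear0 !scaler0 addr0 (ip0l ipP).
exact/ltW/ip_shifted_gt0.
Qed.

Hypothesis G_sa : self_adjoint ip G.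

Lemma E0D (v d : H) : E0 ip G ubar (v + d)
  = E0 ip G ubar v + ip (G v - ubar) d + 2^-1 * ip (G d) d.
Proof.
have Gdv : ip (G d) v = ip (G v) d by rewrite G_sa (ipC ipP).
rewrite /E0 linearD !(ipDl ipP) !(ipDr ipP) (ipNl ipP) Gdv; lra.
Qed.

Lemma E0_mitlar_step (alpha : R) (v d : H) :
  mitlar_op G alpha d = ubar - G v ->
  E0 ip G ubar v - E0 ip G ubar (v + d)
    = ip ((2^-1 - alpha) *: G d + alpha *: d) d.
Proof.
move=> /(congr1 (ip^~ d)); rewrite /mitlar_op => step.
rewrite E0D; move: step.
rewrite !(ipDl ipP) !(ipNl ipP) !(ipZl ipP); lra.
Qed.

End Energy.

Theorem mainTheorem9 (R : realType) (H : completeNormedModType R)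
  (ip : H -> H -> R) (G : {linear H -> H}) (ubar : H) (alpha : R)
  (u : nat -> H) :
  is_inner_product ip ->
  bounded_op G -> self_adjoint ip G -> pos_definite ip G ->
  0 < alpha -> alpha <= 2^-1 ->
  mitlar_iterates G alpha ubar u ->
  forall j : nat,
    let d := u j.+1 - u j in
    [/\ E0 ip G ubar (u j) - E0 ip G ubar (u j.+1)
          = ip ((2^-1 - alpha) *: G d + alpha *: d) d,
        0 <= ip ((2^-1 - alpha) *: G d + alpha *: d) d,
        (ip ((2^-1 - alpha) *: G d + alpha *: d) d = 0 -> u j.+1 = u j) &
        (u j.+1 != u j -> E0 ip G ubar (u j.+1) < E0 ip G ubar (u j))].
Proof.
move=> ipP _ G_sa Gpd a_gt0 a_le [_ step] j d.
have b_ge0 : 0 <= 2^-1 - alpha by rewrite subr_ge0.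
have drop := E0_mitlar_step ipP G_sa (step j).
rewrite [u j + _]addrC subrK in drop.
have form_gt0 : u j.+1 != u j -> 0 < ip ((2^-1 - alpha) *: G d + alpha *: d) d.
  by rewrite -subr_eq0 => /(ip_shifted_gt0 ipP Gpd b_ge0 a_gt0).
split => //; first exact: ip_shifted_ge0.
  by move=> form0; apply/eqP/negPn/negP => /form_gt0; rewrite form0 ltxx.
by move=> /form_gt0; rewrite -drop subr_gt0.
Qed.
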